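(* Fix $0<p<1$, $q=1-p$, and integers $L<U$ with $U-L\ge 4$. With the notation of the context, for every integer $k\ge 2$ the functions $m_k(x)=\mathbb{E}\tau^x_k$ ($x$ an integer in $[L,U]$) satisfy $$m_k(x)=\begin{cases}0,&x=U,\\ 1+q\,m_{k-1}(x-1),&x=U-1,\\ 1+p+pq\,m_{k-2}(x)+q\,m_{k-1}(x-1),&x=U-2,\\ 1+pq\,m_{k-2}(x)+p\,m_{k-1}(x+2)-pq\,m_{k-2}(x+1)+q\,m_{k-1}(x-1),&L+1\le x\le U-3,\\ 0,&x=L,\end{cases}$$ and the family $(m_k)$ is the unique solution of this system of linear difference equations.
   Context: Let $\xi_1,\xi_2,\dots$ be i.i.d. random variables with values in $\{1,-1\}$, $\mathbb{P}(\xi_i=1)=p$, $\mathbb{P}(\xi_i=-1)=q:=1-p$. Define $X_k=-1$ if $\xi_k=-1$; $X_k=2$ if $\xi_k=\xi_{k-1}=1$ (for $k\ge 2$); and $X_k=1$ otherwise (in particular $X_1=1$ when $\xi_1=1$). Let $S_0=0$, $S_k=X_1+\dots+X_k$, and $S^x_k=x+S_k$. For $k\ge 0$ let $\tau^x_k=\min\{l\in\{0,\dots,k\}: S^x_l\le L \text{ or } S^x_l\ge U\}$ if this set is nonempty, and $\tau^x_k=k$ otherwise. *)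

From mathcomp Require Import all_boot all_order all_algebra.
Set Implicit Arguments. Unset Strict Implicit. Unset Printing Implicit Defensive.
Import Order.TTheory GRing.Theory Num.Theory.
Local Open Scope ring_scope.

(* A realization of (xi_1,...,xi_k) is a sequence w of booleans:
   xi_{i+1} = 1  iff  nth false w i = true  (0-indexed). *)

Definition Xstep (w : seq bool) (i : nat) : int :=
  if nth false w i then
    (if (0 < i)%N && nth false w i.-1 then 2 else 1)
  else -1.

Definition Ssum (w : seq bool) (l : nat) : int := \sum_(i < l) Xstep w i.

(* tau^x_k : first l in {0..k} with x + S_l <= L or x + S_l >= U, else k. *)
Definition hits (L U x : int) (w : seq bool) (l : nat) : bool :=
  (x + Ssum w l <= L) || (U <= x + Ssum w l).

Definition tau (L U x : int) (k : nat) (w : seq bool) : nat :=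
  if has (hits L U x w) (iota 0 k.+1)
  then nth k (iota 0 k.+1) (find (hits L U x w) (iota 0 k.+1))
  else k.

Definition weight (R : nzRingType) (p : R) (w : seq bool) : R :=
  \prod_(b <- w) (if b then p else 1 - p).

(* m_k(x) = E tau^x_k ; tau^x_k depends only on xi_1..xi_k. *)
Definition mfun (R : nzRingType) (p : R) (L U : int) (k : nat) (x : int) : R :=
  \sum_(t : k.-tuple bool) weight p t * (tau L U x k t)%:R.

Definition sys_rhs (R : nzRingType) (p : R) (L U : int)
    (f : nat -> int -> R) (k : nat) (x : int) : R :=
  let q := 1 - p in
  if x == U then 0
  else if x == U - 1 then 1 + q * f k.-1 (x - 1)
  else if x == U - 2 then 1 + p + p * q * f k.-2 x + q * f k.-1 (x - 1)
  else if x == L then 0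
  else 1 + p * q * f k.-2 x + p * f k.-1 (x + 2) - p * q * f k.-2 (x + 1)
         + q * f k.-1 (x - 1).

From mathcomp Require Import all_boot all_order all_algebra.
From mathcomp Require Import zify ring.
Import Order.TTheory GRing.Theory Num.Theory.
Set Implicit Arguments. Unset Strict Implicit. Unset Printing Implicit Defensive.
Local Open Scope ring_scope.

(* The walk is a Markov chain once its state records, besides the position x,
   whether the last step was a +1 step: from a state reached by a +1 step, a
   further + moves by 2.  Writing m_k and n_k for the expected exit times
   within k steps from these two kinds of states, one-step analysis gives
     m_{k+1}(x) = 1 + p n_k(x+1) + q m_k(x-1),
     n_{k+1}(x) = 1 + p n_k(x+2) + q m_k(x-1)
   inside (L, U), and both vanish on the boundary.  Since n_{k}(x+1) and
   m_{k}(x+2) both contain the term p n_{k-1}(x+3), n can be eliminated, which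
   yields the system.  The system computes m_k from m_{k-1} and m_{k-2}, so it
   has a unique solution with given m_0 and m_1. *)

Lemma find_iotaS (a : pred nat) (k : nat) :
  find a (iota 0 k.+1) = if a 0%N then 0%N else (find (a \o succn) (iota 0 k)).+1.
Proof.
rewrite /= -[1%N]/(1 + 0)%N iotaDl find_map.
by case: (a 0%N) => //; congr S; apply: eq_find.
Qed.

Lemma big_tuple_cons (V : nmodType) (T : finType) (k : nat) (F : seq T -> V) :
  \sum_(t : k.+1.-tuple T) F t = \sum_(a : T) \sum_(t : k.-tuple T) F (a :: t).
Proof.
rewrite pair_bigA (reindex (fun u : T * k.-tuple T => [tuple of u.1 :: u.2])) //=.
exists (fun t : k.+1.-tuple T => (thead t, [tuple of behead t])).
  by move=> [a t] _; congr pair; apply: val_inj.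
by move=> [[|a s] Hs] _; apply: val_inj.
Qed.

Section Walk.
Variables L U : int.

Definition out (y : int) : bool := (y <= L) || (U <= y).

Definition jump (c b : bool) : int := if b then (if c then 2 else 1) else -1.

(* [c] is the bit read just before [w]. *)
Fixpoint Ssum_from (c : bool) (w : seq bool) (l : nat) : int :=
  if l is l'.+1 then jump c (head false w) + Ssum_from (head false w) (behead w) l'
  else 0.

Lemma Ssum_fromE c w l :
  Ssum_from c w l = \sum_(i < l) jump (nth false (c :: w) i) (nth false w i).
Proof.
elim: l c w => [|l IHl] c w /=; first by rewrite big_ord0.
rewrite big_ord_recl IHl; congr (_ + _); apply: eq_bigr => i _.
by case: w => [|b w] //=; rewrite !nth_nil; case: (nat_of_ord i).
Qed.

Lemma Ssum_from_false w l : Ssum_from false w l = Ssum w l.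
Proof. by rewrite Ssum_fromE; apply: eq_bigr => -[[|i] Hi] _. Qed.

Fixpoint exit_time (c : bool) (x : int) (k : nat) (w : seq bool) : nat :=
  if k is k'.+1 then
    if out x then 0%N
    else (exit_time (head false w) (x + jump c (head false w)) k' (behead w)).+1
  else 0%N.

Lemma find_out_Ssum_from c x k w :
  find (fun l => out (x + Ssum_from c w l)) (iota 0 k) = exit_time c x k w.
Proof.
elim: k c x w => [|k IHk] c x w //.
rewrite find_iotaS /= addr0; case: (out x) => //; congr S.
by rewrite -IHk; apply: eq_find => l /=; rewrite addrA.
Qed.

(* Searching [0..k] with default [k] amounts to searching [0..k-1], whose
   failure value is [k]. *)
Lemma tau_find x k w : tau L U x k w = find (hits L U x w) (iota 0 k).
Proof.
rewrite /tau -addn1 iotaD add0n has_cat find_cat /=.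
have [hit_early|no_early_hit] := boolP (has (hits L U x w) (iota 0 k)).
  have lt_find_k : (find (hits L U x w) (iota 0 k) < k)%N.
    by rewrite -[k in (_ < k)%N](size_iota 0) -has_find.
  by rewrite nth_cat size_iota lt_find_k nth_iota // add0n.
rewrite hasNfind // size_iota orbF.
case: ifP => //= hit_k.
by rewrite hit_k nth_cat size_iota addn0 ltnn subnn.
Qed.

Lemma tau_exit_time x k w : tau L U x k w = exit_time false x k w.
Proof.
rewrite tau_find -find_out_Ssum_from; apply: eq_find => l.
by rewrite /hits -Ssum_from_false.
Qed.

End Walk.

Section ExpectedExitTime.
Variables (R : nzRingType) (p : R) (L U : int).

Lemma sum_weight_cons (b : bool) (k : nat) (G : seq bool -> R) :
  \sum_(t : k.-tuple bool) weight p (b :: t) * G t =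
  (if b then p else 1 - p) * \sum_(t : k.-tuple bool) weight p t * G t.
Proof. by rewrite mulr_sumr; apply: eq_bigr => t _; rewrite /weight big_cons mulrA. Qed.

Lemma sum_weight (k : nat) : \sum_(t : k.-tuple bool) weight p t = 1.
Proof.
elim: k => [|k IHk].
  rewrite (eq_bigr (fun _ => 1)) ?sumr_const ?card_tuple //.
  by move=> t _; rewrite (tuple0 t) /weight big_nil.
rewrite big_tuple_cons big_bool /=.
have weight_cons_total b :
    \sum_(t : k.-tuple bool) weight p (b :: t) = if b then p else 1 - p.
  have := sum_weight_cons b k (fun=> 1).
  under eq_bigr do rewrite mulr1; move=> ->.
  by under eq_bigr do rewrite mulr1; rewrite IHk mulr1.
by rewrite !weight_cons_total addrC subrK.
Qed.

Definition mexit (c : bool) (k : nat) (x : int) : R :=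
  \sum_(t : k.-tuple bool) weight p t * (exit_time L U c x k t)%:R.

Lemma mfunE k x : mfun p L U k x = mexit false k x.
Proof. by apply: eq_bigr => t _; rewrite tau_exit_time. Qed.

Lemma mexit_out c k x : out L U x -> mexit c k x = 0.
Proof. by move=> x_out; apply: big1 => -t _; case: k t => [|k] t /=; rewrite ?x_out mulr0. Qed.

Lemma mexitS c k x : ~~ out L U x ->
  mexit c k.+1 x =
  1 + p * mexit true k (x + jump c true) + (1 - p) * mexit false k (x + jump c false).
Proof.
move=> x_in; rewrite {1}/mexit.
rewrite (@big_tuple_cons _ _ _ (fun s => weight p s * (exit_time L U c x k.+1 s)%:R)) big_bool.
have first_step b :
    \sum_(t : k.-tuple bool) weight p (b :: t) * (exit_time L U c x k.+1 (b :: t))%:R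
    = (if b then p else 1 - p) * (1 + mexit b k (x + jump c b)).
  under eq_bigr do rewrite /= (negbTE x_in) -nat1r.
  rewrite (sum_weight_cons b k (fun s => 1 + (exit_time L U b _ k s)%:R)); congr (_ * _).
  by under eq_bigr do rewrite mulrDr mulr1; rewrite big_split sum_weight.
by rewrite !first_step /= !mulrDr !mulr1 addrACA [p + _]addrC subrK addrA.
Qed.

End ExpectedExitTime.

Section Uniqueness.
Variables (R : nzRingType) (p : R) (L U : int).
Hypothesis hLU : 3 <= U - L.

Definition agree_on (f g : nat -> int -> R) (k : nat) : Prop :=
  forall x, L <= x <= U -> f k x = g k x.

Lemma eq_sys_rhs f g k x : L <= x <= U ->
  agree_on f g k.-1 -> agree_on f g k.-2 -> sys_rhs p L U f k x = sys_rhs p L U g k x.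
Proof.
move=> x_in fg1 fg2; rewrite /sys_rhs.
have [//|x_neq_U] := eqVneq x U.
have [x_eq_U1|x_neq_U1] := eqVneq x (U - 1); first by rewrite fg1 //; lia.
have [x_eq_U2|x_neq_U2] := eqVneq x (U - 2); first by rewrite fg1 ?fg2 //; lia.
have [//|x_neq_L] := eqVneq x L.
by rewrite (fg1 (x + 2)) ?(fg1 (x - 1)) ?(fg2 x) ?(fg2 (x + 1)) //; lia.
Qed.

Lemma sys_rhs_unique f g :
  agree_on f g 0 -> agree_on f g 1 ->
  (forall k x, (2 <= k)%N -> L <= x <= U -> f k x = sys_rhs p L U f k x) ->
  (forall k x, (2 <= k)%N -> L <= x <= U -> g k x = sys_rhs p L U g k x) ->
  forall k, agree_on f g k.
Proof.
move=> fg0 fg1 f_sys g_sys k.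
suff [] : agree_on f g k /\ agree_on f g k.+1 by [].
elim: k => [//|k [fgk fgk1]].
split=> // x x_in.
by rewrite f_sys ?g_sys //; apply: eq_sys_rhs.
Qed.

End Uniqueness.

Section System.
Variables (R : comNzRingType) (p : R) (L U : int).
Hypothesis hLU : 3 <= U - L.

Local Notation m := (mexit p L U false).
Local Notation n := (mexit p L U true).

Lemma mexit_falseS k x : ~~ out L U x ->
  m k.+1 x = 1 + p * n k (x + 1) + (1 - p) * m k (x - 1).
Proof. exact: mexitS. Qed.

Lemma mexit_trueS k x : ~~ out L U x ->
  n k.+1 x = 1 + p * n k (x + 2) + (1 - p) * m k (x - 1).
Proof. exact: mexitS. Qed.

Lemma mfun_sys k x : (2 <= k)%N -> L <= x <= U ->
  mfun p L U k x = sys_rhs p L U (mfun p L U) k x.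
Proof.
case: k => [|[|k]] // _ x_in; rewrite /sys_rhs /= !mfunE.
have [->|x_neq_U] := eqVneq x U; first by rewrite mexit_out // /out lexx orbT.
have [->|x_neq_U1] := eqVneq x (U - 1).
  rewrite mexit_falseS; last by rewrite /out; lia.
  by rewrite (mexit_out p true); [rewrite mulr0 addr0 | rewrite /out; lia].
have [->|x_neq_U2] := eqVneq x (U - 2).
  rewrite mexit_falseS; last by rewrite /out; lia.
  rewrite mexit_trueS; last by rewrite /out; lia.
  rewrite (mexit_out p true k); last by rewrite /out; lia.
  by rewrite addrK; ring.
have [->|x_neq_L] := eqVneq x L; first by rewrite mexit_out // /out lexx.
rewrite (@mexit_falseS _ x); last by rewrite /out; lia.
rewrite (@mexit_trueS _ (x + 1)); last by rewrite /out; lia.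
rewrite (@mexit_falseS _ (x + 2)); last by rewrite /out; lia.
have -> : x + 1 + 2 = x + 2 + 1 by ring.
have -> : x + 2 - 1 = x + 1 by ring.
by rewrite addrK; ring.
Qed.

End System.

Theorem theorem3p1 (R : realFieldType) (p : R) (L U : int)
    (hp0 : 0 < p) (hp1 : p < 1) (hLU : 4 <= U - L) :
  (forall (k : nat) (x : int), (2 <= k)%N -> L <= x <= U ->
     mfun p L U k x = sys_rhs p L U (mfun p L U) k x)
  /\
  (forall f : nat -> int -> R,
     (forall x : int, L <= x <= U ->
        f 0%N x = mfun p L U 0 x /\ f 1%N x = mfun p L U 1 x) ->
     (forall (k : nat) (x : int), (2 <= k)%N -> L <= x <= U ->
        f k x = sys_rhs p L U f k x) ->
     forall (k : nat) (x : int), L <= x <= U -> f k x = mfun p L U k x).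
Proof.
have hLU3 : 3 <= U - L by lia.
split=> [|f f01 f_sys]; first exact: mfun_sys.
have [f0 f1] : agree_on L U f (mfun p L U) 0 /\ agree_on L U f (mfun p L U) 1.
  by split=> x x_in; case: (f01 x x_in).
exact (sys_rhs_unique hLU3 f0 f1 f_sys (@mfun_sys _ p _ _ hLU3)).
Qed.
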